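(* Let $\{X_k(m): m\in\mathbb{R}_+,\ k\in\mathbb{N}\}$ be a family of integrable real random variables, independent in $k$, satisfying (C) $\mathbb{E}[X_k(m)]=0$ for all $m,k$; (W1) for every $\varepsilon>0$, $\lim_{m\to\infty}\sup_k\mathbb P(|X_k(m)|>\varepsilon)=0$; (W2) $\lim_{A\to\infty}\sup_{k,m}\mathbb E\big[|X_k(m)|\mathbf 1_{\{|X_k(m)|>A\}}\big]=0$. Let $(m_k)_{k\in\mathbb N}$ be positive reals with $\sum_k m_k=\infty$, $M_n=\sum_{k=1}^n m_k$, fix $K>0$, and for $1\le k\le n$ let $Y_k(m_k)=X_k(m_k)\mathbf 1_{\{|X_k(m_k)|<M_n/m_k\}}\mathbf 1_{\{m_k<K\}}$ (depending on $n$). Then $\lim_{n\to\infty}\max_{1\le k\le n}\frac{M_n}{m_k}\mathbb P\big(|X_k(m_k)|\mathbf 1_{\{m_k<K\}}\ge \tfrac{M_n}{m_k}\big)=0$ and $\lim_{n\to\infty}\max_{1\le k\le n}\frac{m_k}{M_n}\mathbb E[Y_k(m_k)^2]=0.$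
   Context: ''Independent in $k$'' means the families $\{X_k(m):m\in\mathbb R_+\}$ for different $k$ are independent. *)

From HB Require Import structures.
From mathcomp Require Import all_boot all_order all_algebra.
From mathcomp Require Import all_classical all_reals all_analysis.
Set Implicit Arguments. Unset Strict Implicit. Unset Printing Implicit Defensive.
Import Order.TTheory GRing.Theory Num.Theory.
Local Open Scope classical_set_scope.
Local Open Scope ring_scope.

Definition gen_sigma {d} {T : measurableType d} {R : realType}
  (X : nat -> R -> T -> R) (k : nat) : set (set T) :=
  <<s [set A | exists (m : R) (B : set R), 0 < m /\ measurable B /\ A = X k m @^-1` B] >>.

Definition indep_in_k {d} {T : measurableType d} {R : realType}
  (P : probability T R) (X : nat -> R -> T -> R) : Prop :=
  forall (s : seq nat) (E : nat -> set T),
    uniq s ->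
    (forall k, k \in s -> gen_sigma X k (E k)) ->
    P (\big[setI/setT]_(k <- s) E k) = (\prod_(k <- s) P (E k))%E.

From HB Require Import structures.
From mathcomp Require Import all_boot all_order all_algebra.
From mathcomp Require Import all_classical all_reals all_analysis.
From mathcomp Require Import measurable_realfun lra.
Import Order.TTheory GRing.Theory Num.Theory.
Local Open Scope classical_set_scope.
Local Open Scope ring_scope.

(* Only (W2) and [M_n --> +oo] are needed.  For [m_k < K] the threshold
   [a = M_n / m_k] exceeds [M_n / K], which tends to infinity uniformly in k.
   For any [B < a], Markov's inequality gives
   [a P(|X| >= a) <= E[|X|; |X| > B]], and splitting according to [|X| <= B]
   gives [E[X^2; |X| < a] <= B^2 + a E[|X|; |X| > B]], hence
   [(m_k / M_n) E[Y_k^2] <= K B^2 / M_n + E[|X|; |X| > B]].  Choosing B by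
   (W2) and then n large makes both maxima small. *)

Lemma ge0_le_cvge0 (R : realType) (u : nat -> \bar R) :
  (forall e : R, 0 < e -> \forall n \near \oo, (0 <= u n <= e%:E)%E) ->
  u @ \oo --> 0%E.
Proof.
move=> u_small; apply/fine_cvgP; split.
  have := u_small 1 ltr01; apply: filterS => n /andP[u_ge0 u_le1].
  by rewrite ge0_fin_numE// (le_lt_trans u_le1) ?ltry.
apply/cvgrPdist_le => e e_gt0; have := u_small e e_gt0.
apply: filterS => n /andP[u_ge0 u_le]; rewrite sub0r normrN ger0_norm ?fine_ge0//.
by rewrite -lee_fin fineK ?(ge0_fin_numE u_ge0) ?(le_lt_trans u_le) ?ltry.
Qed.

Lemma bigmaxe_nat_cvg0 (R : realType) (f : nat -> nat -> \bar R) :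
  (forall n k, (1 <= k)%N -> (0 <= f n k)%E) ->
  (forall e : R, 0 < e ->
     \forall n \near \oo, forall k, (1 <= k <= n)%N -> (f n k <= e%:E)%E) ->
  (fun n => \big[maxe/-oo%E]_(1 <= k < n.+1) f n k) @ \oo --> 0%E.
Proof.
move=> f_ge0 f_small; apply: ge0_le_cvge0 => e e_gt0.
have n_gt0 : \forall n \near \oo, (0 < n)%N by exists 1%N.
apply: filterS (filterI n_gt0 (f_small e e_gt0)) => n [n_pos f_le]; apply/andP; split.
  by rewrite big_ltn ?ltnS // le_max f_ge0.
rewrite big_nat_cond; apply: bigmax_le => [|k]; first exact: leNye.
by rewrite andbT; exact: f_le.
Qed.

Section tail_expectation.
Context {d} {T : measurableType d} {R : realType} (P : probability T R).

Definition tail_expectation (Z : T -> R) (A : R) : \bar R :=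
  \int[P]_(w in [set w | A < `|Z w|]) `|Z w|%:E.

Lemma tail_expectation_ge0 (Z : T -> R) (A : R) : (0 <= tail_expectation Z A)%E.
Proof. by apply: integral_ge0 => w _; rewrite lee_fin. Qed.

Variables (Z : T -> R) (mZ : measurable_fun setT Z).

Let mnormZ : measurable_fun setT (fun w => `|Z w|).
Proof. by apply: measurableT_comp mZ; exact: normr_measurable. Qed.

Let mEnormZ : measurable_fun setT (fun w => `|Z w|%:E).
Proof. exact: measurableT_comp mnormZ. Qed.

Lemma measurable_normr_gt (A : R) : measurable [set w | A < `|Z w|].
Proof.
have := mnormZ measurableT _ (measurable_itv `]A, +oo[).
by rewrite setTI; congr measurable; apply/seteqP; split => w /=; rewrite in_itv /= andbT.
Qed.

Lemma measurable_normr_ge (a : R) : measurable [set w | a <= `|Z w|].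
Proof.
have := mnormZ measurableT _ (measurable_itv `[a, +oo[).
by rewrite setTI; congr measurable; apply/seteqP; split => w /=; rewrite in_itv /= andbT.
Qed.

Lemma tail_markov (a A : R) : 0 <= a -> A < a ->
  (a%:E * P [set w | (a <= `|Z w|)%R] <= tail_expectation Z A)%E.
Proof.
move=> a_ge0 A_lt_a; rewrite -integral_cst; last exact: measurable_normr_ge.
apply: (@le_trans _ _ (\int[P]_(w in [set w | (a <= `|Z w|)%R]) `|Z w|%:E)%E).
  apply: ge0_le_integral => //; first exact: measurable_normr_ge.
  exact: measurable_funTS.
apply: ge0_subset_integral => //; [exact: measurable_normr_ge|
  exact: measurable_normr_gt|exact: measurable_funTS|].
by move=> w /=; exact: lt_le_trans.
Qed.

Lemma sqr_trunc_le (z a B : R) : 0 <= a ->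
  (z * (if `|z| < a then 1 else 0)) ^+ 2 <=
  B ^+ 2 + a * (if B < `|z| then `|z| else 0).
Proof.
move=> a_ge0; have tail_ge0 : 0 <= a * (if B < `|z| then `|z| else 0).
  by case: ifP => _; rewrite mulr_ge0.
case: ifPn => [z_lt_a|_]; last by rewrite mulr0 expr0n addr_ge0 ?sqr_ge0.
rewrite mulr1 -real_normK ?num_real //; case: ifPn => [_|].
  by rewrite expr2 ler_wpDl ?sqr_ge0 // ler_wpM2r // ltW.
by rewrite -leNgt => z_le_B; rewrite mulr0 addr0 ler_sqr ?nnegrE // (le_trans _ z_le_B).
Qed.

Lemma expectation_sqr_trunc_le (a B : R) : 0 <= a ->
  ('E_P[fun w => ((Z w * (if `|Z w| < a then 1 else 0)) ^+ 2)%R]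
   <= (B ^+ 2)%:E + a%:E * tail_expectation Z B)%E.
Proof.
move=> a_ge0; set S := [set w | B < `|Z w|].
set tailZ := (fun w => `|Z w|%:E) \_ S.
have mtailZ : measurable_fun setT tailZ.
  exact/(measurable_restrictT _ (measurable_normr_gt B)).1/measurable_funTS.
have tailZ_ge0 w : (0 <= tailZ w)%E.
  by apply: erestrict_ge0 => x _; rewrite lee_fin.
have -> : ((B ^+ 2)%:E + a%:E * tail_expectation Z B =
           \int[P]_w ((B ^+ 2)%:E + a%:E * tailZ w))%E.
  rewrite ge0_integralD //.
  - rewrite integral_cst //; congr (_ + _).
      by rewrite -[LHS]mule1; congr (_ * _)%E; symmetry; exact: probability_setT.
    by rewrite ge0_integralZl ?lee_fin // /tail_expectation [in LHS]integral_mkcond.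
  - by move=> w _; rewrite lee_fin sqr_ge0.
  - by move=> w _; rewrite mule_ge0 ?lee_fin.
  - exact: measurable_funeM.
rewrite unlock; apply: ge0_le_integral => //.
- by move=> w _; rewrite lee_fin sqr_ge0.
- apply/measurable_EFinP/measurable_funX/measurable_funM => //.
  by apply: measurable_fun_ifT => //; exact: measurable_fun_ltr.
- exact/emeasurable_funD/measurable_funeM.
move=> w _; have := sqr_trunc_le (Z w) a B a_ge0; rewrite /tailZ patchE.
have [B_lt_Z|Z_le_B] := ltP B `|Z w|.
  by rewrite mem_set // -EFinM -EFinD lee_fin.
rewrite memNset; last by apply/negP; rewrite -leNgt.
by rewrite mulr0 addr0 mule0 adde0 lee_fin.
Qed.

Lemma scaled_tail_prob_le (a B : R) (b : bool) : 0 < a -> (b -> B < a) ->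
  (a%:E * P [set w | (a <= `|Z w| * (if b then 1 else 0))%R]
   <= tail_expectation Z B)%E.
Proof.
case: b => a_gt0 B_lt_a.
  under eq_set do rewrite mulr1.
  by apply: tail_markov => //; [exact: ltW|exact: B_lt_a].
rewrite (_ : [set w | _] = set0) ?measure0 ?mule0 ?tail_expectation_ge0 //.
by apply/seteqP; split => w //=; rewrite mulr0 leNgt a_gt0.
Qed.

Lemma scaled_trunc_second_moment_le (a B c : R) (b : bool) :
  0 < a -> 0 < c -> (b -> B ^+ 2 / c < a) ->
  (a^-1%:E * 'E_P[fun w =>
      ((Z w * (if `|Z w| < a then 1 else 0) * (if b then 1 else 0)) ^+ 2)%R]
   <= c%:E + tail_expectation Z B)%E.
Proof.
case: b => a_gt0 c_gt0 B_small; last first.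
  under eq_fun do rewrite mulr0 expr0n.
  by rewrite expectation_cst mule0 adde_ge0 ?tail_expectation_ge0 ?lee_fin ?(ltW c_gt0).
under eq_fun do rewrite mulr1.
have a_ge0 := ltW a_gt0.
have ainv_ge0 : (0 <= a^-1%:E)%E by rewrite lee_fin invr_ge0.
apply: le_trans (lee_wpmul2l ainv_ge0 (expectation_sqr_trunc_le a B a_ge0)) _.
rewrite muleDr ?ge0_adde_def ?inE ?mule_ge0 ?lee_fin ?sqr_ge0 ?tail_expectation_ge0 //.
rewrite muleA -!EFinM mulVf ?gt_eqF // mul1e; apply: leeD => //; rewrite lee_fin.
by rewrite ler_pdivrMl // -ler_pdivrMr // ltW // B_small.
Qed.

End tail_expectation.

Lemma uniform_tail_expectation_le {d} {T : measurableType d} {R : realType}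
    {P : probability T R} {X : nat -> R -> T -> R} {e : R} :
  ((fun A : R => ereal_sup [set x | exists (k : nat) (m : R), 0 < m /\
                       x = (\int[P]_(w in [set w | (A < `|X k m w|)%R]) (`|X k m w|)%:E)%E])
     @ +oo --> 0%E) ->
  0 < e -> exists2 B : R, 0 < B &
    forall k m, 0 < m -> (tail_expectation P (X k m) B <= e%:E)%E.
Proof.
move=> W2 e_gt0.
have sup_lt_e := W2 _ (nbhs_open_ereal_lt (f := fun=> e) e_gt0).
have [B [/= B_gt0 supB]] := filter_ex (filterI (nbhs_pinfty_gt (@real0 R)) sup_lt_e).
exists B => // k m m_gt0; apply/ltW/le_lt_trans/supB.
by apply: ereal_sup_ubound; exists k, m.
Qed.

Lemma lt_divr_of_mul_lt (R : realFieldType) (L x m K : R) :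
  0 < m -> m < K -> 0 <= L -> K * L < x -> L < x / m.
Proof. by move=> m_gt0 m_lt_K L_ge0 KL_lt_x; rewrite ltr_pdivlMr //; nra. Qed.

Theorem lemma5p1 (d : measure_display) (T : measurableType d) (R : realType)
  (P : probability T R) (X : nat -> R -> T -> R) (mk : nat -> R) (K : R) :
  (forall k m, 0 < m -> measurable_fun setT (X k m)) ->
  (forall k m, 0 < m -> P.-integrable setT (EFin \o X k m)) ->
  indep_in_k P X ->
  (* (C) *)
  (forall k m, 0 < m -> ('E_P[X k m] = 0)%E) ->
  (* (W1) *)
  (forall eps : R, 0 < eps ->
     (fun m : R => ereal_sup [set P [set w | eps < `|X k m w|] | k in [set: nat]])
       @ +oo --> 0%E) ->
  (* (W2) *)
  ((fun A : R => ereal_sup [set x | exists (k : nat) (m : R), 0 < m /\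
                       x = (\int[P]_(w in [set w | (A < `|X k m w|)%R]) (`|X k m w|)%:E)%E])
     @ +oo --> 0%E) ->
  (forall k, 0 < mk k) ->
  ((fun n => \sum_(1 <= k < n.+1) mk k) @ \oo --> +oo) ->
  0 < K ->
  let M := fun n : nat => \sum_(1 <= k < n.+1) mk k in
  let Y := fun (n k : nat) (w : T) =>
     X k (mk k) w * (if `|X k (mk k) w| < M n / mk k then 1 else 0)
       * (if mk k < K then 1 else 0) in
  ((fun n : nat => \big[maxe/-oo%E]_(1 <= k < n.+1)
       ((M n / mk k)%:E *
          P [set w | (M n / mk k <= `|X k (mk k) w| * (if mk k < K then 1 else 0))%R])%E)
     @ \oo --> 0%E) /\
  ((fun n : nat => \big[maxe/-oo%E]_(1 <= k < n.+1)
       ((mk k / M n)%:E * 'E_P[fun w => (Y n k w ^+ 2)%R])%E)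
     @ \oo --> 0%E).
Proof.
move=> mX _ _ _ _ W2 mk_gt0 M_cvg K_gt0 M Y.
have mk_ge0 k : 0 <= mk k := ltW (mk_gt0 k).
have M_ge0 n : 0 <= M n by apply: sumr_ge0.
have M_large L : \forall n \near \oo, K * L < M n by move/cvgryPgt : M_cvg; apply.
have ratio_gt L n k : 0 <= L -> K * L < M n -> mk k < K -> L < M n / mk k.
  by move=> L_ge0 KL_lt_M mk_lt_K; exact: lt_divr_of_mul_lt (mk_gt0 k) mk_lt_K L_ge0 KL_lt_M.
have ratio_gt0 L n k : 0 <= L -> K * L < M n -> 0 < M n / mk k.
  by move=> L_ge0 KL_lt_M; exact: divr_gt0 (le_lt_trans (mulr_ge0 (ltW K_gt0) L_ge0) KL_lt_M) (mk_gt0 k).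
split; apply: bigmaxe_nat_cvg0 => [n k _|e e_gt0].
- by rewrite mule_ge0 ?lee_fin ?divr_ge0 ?M_ge0.
- have [B B_gt0 tailB] := uniform_tail_expectation_le W2 e_gt0.
  near=> n => k _; apply: le_trans (tailB k (mk k) (mk_gt0 k)).
  have KB_lt_M : K * B < M n by near: n; exact: M_large.
  apply: scaled_tail_prob_le; first exact: mX.
    exact: ratio_gt0 (ltW B_gt0) KB_lt_M.
  exact: ratio_gt (ltW B_gt0) KB_lt_M.
- by rewrite mule_ge0 ?lee_fin ?divr_ge0 ?M_ge0 // expectation_ge0 // => w; exact: sqr_ge0.
- have e2_gt0 : 0 < e / 2 by rewrite divr_gt0.
  have [B B_gt0 tailB] := uniform_tail_expectation_le W2 e2_gt0.
  have L_ge0 : 0 <= B ^+ 2 / (e / 2) by rewrite divr_ge0 ?sqr_ge0 ?(ltW e2_gt0).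
  near=> n => k _.
  have KL_lt_M : K * (B ^+ 2 / (e / 2)) < M n by near: n; exact: M_large.
  rewrite -invf_div (splitr e) EFinD.
  apply: le_trans (leeD2l _ (tailB k (mk k) (mk_gt0 k))).
  apply: scaled_trunc_second_moment_le => //; first exact: mX.
    exact: ratio_gt0 L_ge0 KL_lt_M.
  exact: ratio_gt L_ge0 KL_lt_M.
Unshelve. all: by end_near.
Qed.
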